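(* Let $(D,\Sigma)$ be a strongly recursive tropical linear series of rank $r$ on a metric graph $\Gamma$, and let $E$ be an effective divisor with $\deg E\le r$. If $f\in\Sigma$ satisfies $\rho_v(f)\ge E(v)$ for all $v\in\Gamma$ (the local rank property for $E$), then $\mathrm{div}(f)+D\ge E$ (the Baker–Norine rank property for $E$).
   Context: Metric graphs and functions. A metric graph is obtained from a finite connected graph by identifying each edge with a closed interval of positive length. $T_v(\Gamma)$ is the set of outgoing tangent directions. $\mathrm{sl}_\eta(f)$ is the outgoing slope of a continuous piecewise linear integer-slope function $f$. We set $\mathrm{div}(f)=\sum_v(-\sum_{\eta\in T_v}\mathrm{sl}_\eta(f))v$ and $R(D)=\{f:D+\mathrm{div}(f)\ge0\}$. Tropical linear series. A tropical linear series of rank $r$ is $(D,\Sigma)$ with $\Sigma\subseteq R(D)$ a finitely generated tropical submodule (closed under $\min\{f_i+a_i\}$) such that: (1) every effective $E$ of degree $r$ admits $f\in\Sigma$ with $\mathrm{div}(f)+D\ge E$; (2) every $r+2$ functions are tropically dependent (some $\min_i(f_i+a_i)$ is attained at least twice everywhere). It is strongly recursive (recursively in $r$) if: (3) every $r$ functions lie in a strongly recursive subseries of rank $r-1$; (4) for $S_1,S_2\subseteq\Sigma$ of sizes $s_1,s_2\le r$ with $s_1+s_2\ge r+2$, there are strongly recursive subseries $\Sigma_i\supseteq S_i$ of ranks $s_i-1$ whose intersection contains a strongly recursive series of rank $s_1+s_2-r-2$. Local arrays. Each slope set $\{\mathrm{sl}_\eta(f):f\in\Sigma\}$ has exactly $r+1$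 elements $s_\eta[0]<\dots<s_\eta[r]$. Fix at each $v$ of valence $d$ an ordering $\eta_1,\dots,\eta_d$. The local array is $M_v=\{\mathbf x\in[r]^d:\exists f\in\Sigma,\ \mathrm{sl}_{\eta_i}(f)=s_{\eta_i}[x_i]\ \forall i\}$, where $[r]=\{0,\dots,r\}$; such $\mathbf x$ and $f$ are associated. Permutation arrays and rank arrays. $[r]^d$ is ordered coordinatewise. For $P\subseteq[r]^d$, $P$ is rankable of rank $s$ if each coordinate takes exactly $s+1$ distinct values on $P$. $P$ is totally rankable if every $P[\mathbf x]=\{\mathbf y\in P:\mathbf y\succeq\mathbf x\}$ is rankable, and then its rank array is $\rho_P(\mathbf x)=\mathrm{rank}\,P[\mathbf x]$ (equal to $-1$ if $P[\mathbf x]=\emptyset$). Redundant points are coordinatewise minima of at least two elements of $P$ each sharing a coordinate with the point. A permutation array is a totally rankable $P$ of rank $r$ with no redundant points, and $\overline P$ adds its redundant points. For a strongly recursive tropical linear series each $M_v$ equals $\overline{P_v}$ for a unique permutation array $P_v$ of rank $r$ and dimension $d$. Local rank. For $f\in\Sigma$ associated to $\mathbf x\in M_v$, define $\rho_v(f)=\rho_{P_v}(\mathbf x)$. *)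

From HB Require Import structures.
From mathcomp Require Import all_boot all_order all_algebra.
From mathcomp Require Import boolp classical_sets reals.

Set Implicit Arguments.
Unset Strict Implicit.
Unset Printing Implicit Defensive.
Import Order.TTheory GRing.Theory Num.Theory.
Local Open Scope classical_set_scope.
Local Open Scope ring_scope.

(* A metric graph is given by a finite connected (multi)graph, with vertex   *)
(* set V, edge set Ed, endpoint maps src/tgt (loops allowed), and a positive *)
(* length for each edge; edge e is identified with [0, len e], with 0 glued  *)
(* to src e and len e glued to tgt e.                                       *)

Definition adj_rel (V Ed : finType) (src tgt : Ed -> V) : rel V :=
  fun u v => [exists e, ((src e == u) && (tgt e == v)) ||
                         ((tgt e == u) && (src e == v))].

Record mgraph (R : realType) := MGraph {
  mV : finType;
  mE : finType;
  msrc : mE -> mV;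
  mtgt : mE -> mV;
  mlen : mE -> R;
  mlen_gt0 : forall e, 0 < mlen e;
  mconn : forall u v, connect (adj_rel msrc mtgt) u v }.

Section MetricGraph.
Variables (R : realType) (G : mgraph R).

Definition inner_pt := {et : mE G * R | 0 < et.2 < mlen et.1}.

Definition gpoint := (mV G + inner_pt)%type.

Definition fn := gpoint -> R.

Definition fedge (f : fn) (e : mE G) (t : R) : R :=
  if t == 0 then f (inl (msrc e))
  else if t == mlen e then f (inl (mtgt e))
  else match insub (e, t) : option inner_pt with
       | Some q => f (inr q)
       | None => 0
       end.

(* f is continuous, piecewise linear with integer slopes (finitely many
   pieces on each edge; continuity, including at the vertices, is built in
   since each piece is affine on a closed subinterval). *)
Definition is_PL (f : fn) : Prop :=
  forall e : mE G, exists ts : seq R,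
    [/\ head 0 ts = 0, last 0 ts = mlen e, sorted <%R ts &
     forall k, (k.+1 < size ts)%N ->
       exists (m : int) (c : R), forall t,
         nth 0 ts k <= t <= nth 0 ts k.+1 -> fedge f e t = c + m%:~R * t].

(* Tangent directions: (e, true) = leaving along e in the increasing
   parameter direction, (e, false) = in the decreasing direction. *)
Definition tanp (p : gpoint) : pred (mE G * bool) :=
  match p with
  | inl v => fun eb => if eb.2 then msrc eb.1 == v else mtgt eb.1 == v
  | inr q => fun eb => eb.1 == (sval q).1
  end.

Definition tdir (p : gpoint) := {eb : mE G * bool | tanp p eb}.

Definition base_par (p : gpoint) (eb : mE G * bool) : R :=
  match p with
  | inl _ => if eb.2 then 0 else mlen eb.1
  | inr q => (sval q).2
  end.

Definition slope_rel (f : fn) (p : gpoint) (eta : tdir p) (s : int) : Prop :=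
  let e := (val eta).1 in let b := (val eta).2 in let t0 := base_par p (val eta) in
  exists2 eps : R, 0 < eps & forall h : R, 0 < h < eps ->
    fedge f e (t0 + (if b then h else - h)) = fedge f e t0 + s%:~R * h.

(* sl_eta(f) (well defined for piecewise linear f). *)
Definition sl (f : fn) (p : gpoint) (eta : tdir p) : int :=
  xget 0%R (fun s => slope_rel f eta s).

Definition divf (f : fn) (p : gpoint) : int := - \sum_(eta : tdir p) sl f eta.

Definition is_divisor (D : gpoint -> int) : Prop :=
  exists s : seq gpoint, forall p, p \notin s -> D p = 0.

(* An effective divisor is represented by the multiset (seq) of its points;
   E(p) = number of occurrences of p, deg E = size E. *)
Definition eff (E : seq gpoint) (p : gpoint) : int := (count_mem p E)%:Z.

Definition RD (D : gpoint -> int) (f : fn) : Prop :=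
  is_PL f /\ forall p, 0 <= D p + divf f p.

Definition is_tmin (n : nat) (S : {set 'I_n}) (g : 'I_n -> fn) (a : 'I_n -> R)
  (f : fn) : Prop :=
  forall p, (forall i, i \in S -> f p <= g i p + a i) /\
            (exists2 i, i \in S & f p = g i p + a i).

(* Sigma is a finitely generated tropical submodule: it consists exactly of
   the tropical combinations (with coefficients in R u {infinity}, not all
   infinite) of finitely many generators. *)
Definition fg_tmodule (Sig : set fn) : Prop :=
  exists (n : nat) (g : 'I_n -> fn),
    forall f, Sig f <-> exists2 S : {set 'I_n}, S != finset.set0 &
                          exists a : 'I_n -> R, is_tmin S g a f.

(* Tropical dependence of a finite family: for some coefficients in
   R u {infinity} not all infinite, the minimum is attained at least twice
   at every gpoint. *)
Definition tdependent (k : nat) (fs : 'I_k -> fn) : Prop :=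
  exists2 S : {set 'I_k}, S != finset.set0 & exists a : 'I_k -> R,
    forall p, exists i j, [/\ i \in S, j \in S, i != j,
       fs i p + a i = fs j p + a j &
       forall l, l \in S -> fs i p + a i <= fs l p + a l].

Definition tls (r : nat) (D : gpoint -> int) (Sig : set fn) : Prop :=
  [/\ is_divisor D, (forall f, Sig f -> RD D f), fg_tmodule Sig,
   (forall E : seq gpoint, size E = r ->
      exists2 f, Sig f & forall p, eff E p <= D p + divf f p) &
   (forall fs : 'I_(r.+2) -> fn, (forall i, Sig (fs i)) -> tdependent fs)].

(* Strong recursivity, by recursion on the rank (with fuel n > r).
   Subseries are taken with the same divisor D.  Condition (3) is imposed
   for r >= 1; for r = 0 it is vacuous (the empty series is the strongly
   recursive series of rank -1). *)
Fixpoint srec_fuel (n r : nat) (D : gpoint -> int) (Sig : set fn) : Prop :=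
  match n with
  | 0 => False
  | n'.+1 =>
    [/\ tls r D Sig,
     (0 < r)%N -> forall fs : 'I_r -> fn, injective fs -> (forall i, Sig (fs i)) ->
       exists2 Sig' : set fn, Sig' `<=` Sig /\ srec_fuel n' r.-1 D Sig' &
         forall i, Sig' (fs i) &
     forall (s1 s2 : nat) (S1 : 'I_s1 -> fn) (S2 : 'I_s2 -> fn),
       (s1 <= r)%N -> (s2 <= r)%N -> (r + 2 <= s1 + s2)%N ->
       injective S1 -> injective S2 ->
       (forall i, Sig (S1 i)) -> (forall i, Sig (S2 i)) ->
       exists Sig1 Sig2 : set fn,
         [/\ Sig1 `<=` Sig /\ srec_fuel n' s1.-1 D Sig1,
             Sig2 `<=` Sig /\ srec_fuel n' s2.-1 D Sig2,
             (forall i, Sig1 (S1 i)), (forall i, Sig2 (S2 i)) &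
             exists2 Sig3 : set fn, Sig3 `<=` Sig1 `&` Sig2 &
               srec_fuel n' (s1 + s2 - r - 2) D Sig3]]
  end.

Definition strongly_recursive (r : nat) (D : gpoint -> int) (Sig : set fn) : Prop :=
  srec_fuel r.+1 r D Sig.

Definition slope_set (Sig : set fn) (p : gpoint) (eta : tdir p) : set int :=
  fun s => exists2 f, Sig f & sl f eta = s.

(* s is the k-th smallest element (counting from 0) of the set S. *)
Definition kth (S : set int) (k : nat) (s : int) : Prop :=
  S s /\ exists l : seq int, [/\ uniq l, size l = k &
                                 forall t, t \in l <-> (S t /\ t < s)].

Definition assoc (r : nat) (Sig : set fn) (p : gpoint) (f : fn)
  (x : {ffun tdir p -> 'I_r.+1}) : Prop :=
  forall eta, kth (slope_set Sig eta) (x eta) (sl f eta).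

Definition local_array (r : nat) (Sig : set fn) (p : gpoint)
  (x : {ffun tdir p -> 'I_r.+1}) : Prop :=
  exists2 f, Sig f & assoc Sig f x.

End MetricGraph.

Section Arrays.
Variables (T : finType) (r : nat).
Local Notation A := {ffun T -> 'I_r.+1}.

Definition cw_le (x y : A) : bool := [forall i, (x i <= y i)%N].

Definition upset (P : {set A}) (x : A) : {set A} := [set y in P | cw_le x y].

Definition rankable (P : {set A}) (s : int) : Prop :=
  forall i : T, (#|(fun y : A => y i) @: P|)%:Z = s + 1.

Definition totally_rankable (P : {set A}) : Prop :=
  forall x : A, exists s : int, rankable (upset P x) s.

Definition redundant (P : {set A}) (x : A) : Prop :=
  exists Y : {set A}, [/\ Y \subset P, (1 < #|Y|)%N,
    (forall i, (forall y, y \in Y -> (x i <= y i)%N) /\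
               (exists2 y, y \in Y & y i = x i)) &
    (forall y, y \in Y -> exists i, y i = x i)].

Definition perm_array (P : {set A}) : Prop :=
  [/\ totally_rankable P, rankable P r%:Z &
      forall x, x \in P -> ~ redundant P x].

Definition in_closure (P : {set A}) (x : A) : Prop := x \in P \/ redundant P x.

End Arrays.

(* Local rank property for E: for every p in Gamma, rho_p(f) >= E(p), where
   rho_p(f) = rho_{P_p}(x) for the permutation array P_p with
   M_p = \overline{P_p} and x associated to f. *)
Definition local_rank_ge (R : realType) (G : mgraph R) (r : nat)
  (Sig : set (fn G)) (f : fn G) (E : seq (gpoint G)) : Prop :=
  forall p : gpoint G,
    exists P : {set {ffun tdir p -> 'I_r.+1}},
      [/\ perm_array P,
          (forall x, local_array Sig x <-> in_closure P x) &
          exists2 x, assoc Sig f x &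
            exists2 s : int, rankable (upset P x) s & eff E p <= s].

From mathcomp Require Import all_boot all_order all_algebra.
From mathcomp Require Import boolp classical_sets reals.
From mathcomp Require Import zify.
Set Implicit Arguments.
Unset Strict Implicit.
Unset Printing Implicit Defensive.
Import Order.TTheory GRing.Theory Num.Theory.
Local Open Scope ring_scope.

(* At a point p with a tangent direction eta, let x be associated to f and
   let s = rho_p(f) = rank P[x].  Since the eta-coordinate takes s + 1
   values on P[x], some y in P[x] has y_eta >= x_eta + s.  As y lies in
   M_p, it is associated to some g in Sigma, and because slopes are listed
   increasingly, sl_eta'(g) >= sl_eta'(f) + (y_eta' - x_eta') in every
   direction eta'.  Summing, div(f)(p) >= div(g)(p) + s, hence
   D(p) + div(f)(p) >= D(p) + div(g)(p) + s >= s >= E(p).  A point without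
   tangent directions has div = 0 for every function, and condition (1)
   applied to r copies of p gives D(p) >= r >= E(p). *)

Lemma size_uniq_int_itv (s : seq int) (a b : int) :
  a <= b -> uniq s -> (forall t, t \in s -> a <= t < b) -> (size s)%:Z <= b - a.
Proof.
move=> le_ab uniq_s s_itv.
pose s' := map (fun t => `|t - a|%N) s.
have uniq_s' : uniq s'.
  rewrite map_inj_in_uniq // => u v /s_itv u_itv /s_itv v_itv; lia.
have s'_sub : {subset s' <= iota 0 `|b - a|%N}.
  move=> n /mapP[t /s_itv t_itv ->]; rewrite mem_iota add0n; lia.
have := uniq_leq_size uniq_s' s'_sub; rewrite size_iota size_map; lia.
Qed.

Lemma kth_gap (S : set int) (i j : nat) (a b : int) :
  kth S i a -> kth S j b -> (i <= j)%N -> a + (j - i)%N%:Z <= b.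
Proof.
move=> [Sa [la [uniq_la size_la la_below]]] [Sb [lb [uniq_lb size_lb lb_below]]] le_ij.
have le_ab : a <= b.
  rewrite leNgt; apply/negP => lt_ba.
  have uniq_blb : uniq (b :: lb).
    by rewrite /= uniq_lb andbT; apply/negP => /lb_below[_]; rewrite ltxx.
  have sub : {subset b :: lb <= la}.
    move=> t; rewrite inE => /orP[/eqP-> | /lb_below[St lt_tb]]; apply/la_below.
      by [].
    by split=> //; apply: lt_trans lt_ba.
  by have := uniq_leq_size uniq_blb sub; rewrite /= size_lb size_la; lia.
have below_a : size (filter (< a) lb) = i.
  rewrite -size_la; apply/perm_size/uniq_perm; rewrite ?filter_uniq //.
  move=> t; rewrite mem_filter; apply/andP/idP.
    by case=> lt_ta /lb_below[St _]; apply/la_below.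
  move=> /la_below[St lt_ta]; split=> //; apply/lb_below; split=> //.
  exact: lt_le_trans le_ab.
have from_a : (size (filter (predC (< a)) lb))%:Z <= b - a.
  apply: size_uniq_int_itv => //; first by rewrite filter_uniq.
  by move=> t; rewrite mem_filter /= -leNgt => /andP[-> /lb_below[_ ->]].
have := count_predC (< a) lb; rewrite -!size_filter below_a size_lb.
move: from_a; lia.
Qed.

Section Arrays.
Variables (T : finType) (r : nat).
Local Notation A := {ffun T -> 'I_r.+1}.

Lemma card_coord_image_le (U : {set A}) (i : T) (lo hi : nat) :
  (forall z, z \in U -> lo <= z i <= hi)%N ->
  (#|(fun z : A => z i) @: U| <= (hi - lo).+1)%N.
Proof.
move=> U_itv; rewrite cardE -(size_map val) -[(hi - lo).+1](size_iota lo).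
apply: uniq_leq_size; first by rewrite map_inj_uniq ?enum_uniq //; apply: val_inj.
move=> n /mapP[k]; rewrite mem_enum => /imsetP[z /U_itv z_itv ->] ->.
move: z_itv; rewrite mem_iota /=; lia.
Qed.

Lemma upset_coord_gap (P : {set A}) (x : A) (s : int) (i : T) :
  rankable (upset P x) s -> 0 <= s ->
  exists2 y, y \in upset P x & s <= (y i - x i)%N%:Z.
Proof.
move=> rank_s s_ge0; have card_s := rank_s i.
have [y0 y0U] : exists y0, y0 \in upset P x.
  apply/set0Pn/negP => /eqP U0; move: card_s; rewrite U0 imset0 cards0; lia.
have [y yU y_max] := @arg_maxnP _ y0 (mem (upset P x)) (fun z : A => val (z i)) y0U.
exists y => //.
have U_itv : forall z, z \in upset P x -> (x i <= z i <= y i)%N.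
  move=> z zU; have := y_max z zU; move: zU; rewrite inE => /andP[_ /forallP/(_ i)].
  by move=> -> /=.
have := card_coord_image_le U_itv; move: card_s (U_itv y yU); lia.
Qed.

End Arrays.

Section Slopes.
Variables (R : realType) (G : mgraph R).

Lemma divf_no_tangent (p : gpoint G) (f : fn G) : #|{: tdir p}| = 0 -> divf f p = 0.
Proof.
by move=> no_tan; rewrite /divf big1 ?oppr0 // => eta _; move: no_tan; rewrite (cardD1 eta).
Qed.

Lemma tls_no_tangent_rank_le (r : nat) (D : gpoint G -> int) (Sig : set (fn G))
    (p : gpoint G) :
  tls r D Sig -> #|{: tdir p}| = 0 -> r%:Z <= D p.
Proof.
move=> [_ _ _ exists_E _] no_tan.
have [g _ /(_ p)] := exists_E (nseq r p) (size_nseq _ _).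
by rewrite divf_no_tangent // addr0 /eff count_nseq /= eqxx mul1n.
Qed.

Variables (r : nat) (Sig : set (fn G)) (p : gpoint G).

Lemma assoc_sl_gap (f g : fn G) (x y : {ffun tdir p -> 'I_r.+1}) :
  assoc Sig f x -> assoc Sig g y -> cw_le x y ->
  forall eta, sl f eta + (y eta - x eta)%N%:Z <= sl g eta.
Proof. by move=> fx gy /forallP x_le_y eta; apply: kth_gap (fx eta) (gy eta) _. Qed.

Lemma divf_assoc_gap (f g : fn G) (x y : {ffun tdir p -> 'I_r.+1}) (eta0 : tdir p) :
  assoc Sig f x -> assoc Sig g y -> cw_le x y ->
  divf g p + (y eta0 - x eta0)%N%:Z <= divf f p.
Proof.
move=> fx gy x_le_y.
have gap_le : (y eta0 - x eta0)%N%:Z <= \sum_(eta : tdir p) (y eta - x eta)%N%:Z.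
  by rewrite (bigD1 eta0) //= lerDl sumr_ge0.
have sum_le : \sum_(eta : tdir p) sl f eta + \sum_(eta : tdir p) (y eta - x eta)%N%:Z
                <= \sum_(eta : tdir p) sl g eta.
  by rewrite -big_split /= ler_sum // => eta _; apply: assoc_sl_gap.
rewrite /divf; move: gap_le sum_le; lia.
Qed.

End Slopes.

Theorem mainTheorem7 (R : realType) (G : mgraph R) (r : nat)
  (D : gpoint G -> int) (Sig : set (fn G)) (E : seq (gpoint G)) (f : fn G) :
  strongly_recursive r D Sig ->
  (size E <= r)%N ->
  Sig f ->
  local_rank_ge r Sig f E ->
  forall p : gpoint G, eff E p <= D p + divf f p.
Proof.
move=> [tls_Sig _ _] size_E Sf local_rank p.
have [_ Sig_RD _ _ _] := tls_Sig.
have Ep_le_r : eff E p <= r%:Z by rewrite lez_nat (leq_trans (count_size _ _)).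
case: (posnP #|{: tdir p}|) => [no_tan | /card_gt0P[eta0 _]].
  rewrite divf_no_tangent // addr0.
  apply: (le_trans Ep_le_r); exact: tls_no_tangent_rank_le tls_Sig no_tan.
have [P [_ M_P [x fx [s rank_s Ep_le_s]]]] := local_rank p.
have Df_ge0 := (Sig_RD f Sf).2 p.
have [s_lt0 | s_ge0] := ltP s 0; first by move: Ep_le_s; lia.
have [y yU s_le_gap] := upset_coord_gap eta0 rank_s s_ge0.
have [yP x_le_y] : y \in P /\ cw_le x y by move: yU; rewrite inE => /andP.
have [g Sg gy] : local_array Sig y by apply/M_P; left.
have Dg_ge0 := (Sig_RD g Sg).2 p.
apply: le_trans Ep_le_s (le_trans s_le_gap _).
apply: le_trans (ler_wpDl Dg_ge0 (lexx _)) _.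
by rewrite -addrA lerD2l; apply: divf_assoc_gap eta0 fx gy x_le_y.
Qed.
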